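(* Let $M^1=\langle W^1,\mathcal{N}^1,V^1\rangle$ and $M^2=\langle W^2,\mathcal{N}^2,V^2\rangle$ be nIML1-models and let $w_1\in W^1$, $w_2\in W^2$ be behaviorally equivalent. Then for every formula $\varphi$: $w_1\Vdash_{M^1}\varphi$ iff $w_2\Vdash_{M^2}\varphi$.
   Context: Formulas are built from a denumerable set $PV$ of propositional variables and $\bot$ using binary $\land,\lor,\rightarrow,\rightsquigarrow$ and unary $\Delta$. An nIML1-model is a triple $\langle W,\mathcal{N},V\rangle$ with $W\neq\emptyset$, $\mathcal{N}:W\to P(P(W))$ satisfying for all $w$: (a) $w\in\bigcap\mathcal{N}_w$; (b) $\bigcap\mathcal{N}_w\in\mathcal{N}_w$; (c) $u\in\bigcap\mathcal{N}_w\Rightarrow\bigcap\mathcal{N}_u\subseteq\bigcap\mathcal{N}_w$; (d) $\bigcap\mathcal{N}_w\subseteq X\subseteq\bigcup\mathcal{N}_w\Rightarrow X\in\mathcal{N}_w$; (e) $u\in\bigcap\mathcal{N}_w\Rightarrow\bigcup\mathcal{N}_u\subseteq\bigcup\mathcal{N}_w$ ($\bigcap\mathcal{N}_w$, $\bigcup\mathcal{N}_w$ the intersection and union of the family $\mathcal{N}_w$), and $V:PV\to P(W)$ with $w\in V(q)\Rightarrow\bigcap\mathcal{N}_w\subseteq V(q)$. Forcing: atoms via $V$; $\bot$ never; $\land,\lor$ pointwise; $w\Vdash\varphi\rightarrow\psi$ iff every $v\in\bigcap\mathcal{N}_w$ has $v\nVdash\varphi$ or $v\Vdash\psi$; $w\Vdash\varphi\rightsquigarrow\psi$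 iff every $v\in\bigcup\mathcal{N}_w$ has $v\nVdash\varphi$ or $v\Vdash\psi$; $w\Vdash\Delta\varphi$ iff every $v\in\bigcup\mathcal{N}_w$ has $v\Vdash\varphi$. A bounded morphism from $M^1$ to $M^2$ is $f:W^1\to W^2$ such that for every $w$: $w$ and $f(w)$ force the same propositional variables, $f[\bigcap\mathcal{N}^1_w]=\bigcap\mathcal{N}^2_{f(w)}$ and $f[\bigcup\mathcal{N}^1_w]=\bigcup\mathcal{N}^2_{f(w)}$. Worlds $w_1\in W^1$, $w_2\in W^2$ are behaviorally equivalent if there exist an nIML1-model $B$ and bounded morphisms $f:M^1\to B$, $g:M^2\to B$ with $f(w_1)=g(w_2)$. *)

Definition PV := nat.

Inductive form : Type :=
| Var : PV -> form
| Bot : form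
| And : form -> form -> form
| Or : form -> form -> form
| Imp : form -> form -> form
| SImp : form -> form -> form
| Delta : form -> form.

Record model : Type := Model {
  W : Type;
  N : W -> (W -> Prop) -> Prop;
  V : PV -> W -> Prop
}.

Definition bigcapN {M : model} (w : W M) : W M -> Prop :=
  fun v => forall X, N M w X -> X v.
Definition bigcupN {M : model} (w : W M) : W M -> Prop :=
  fun v => exists X, N M w X /\ X v.

Definition subset {T : Type} (A B : T -> Prop) := forall x, A x -> B x.

Definition is_nIML1 (M : model) : Prop :=
  inhabited (W M) /\
  (forall w : W M,
     bigcapN w w /\
     N M w (bigcapN w) /\
     (forall u, bigcapN w u -> subset (bigcapN u) (bigcapN w)) /\
     (forall X, subset (bigcapN w) X -> subset X (bigcupN w) -> N M w X) /\
     (forall u, bigcapN w u -> subset (bigcupN u) (bigcupN w))) /\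
  (forall (q : PV) (w : W M), V M q w -> subset (bigcapN w) (V M q)).

Fixpoint forces (M : model) (w : W M) (phi : form) : Prop :=
  match phi with
  | Var q => V M q w
  | Bot => False
  | And a b => forces M w a /\ forces M w b
  | Or a b => forces M w a \/ forces M w b
  | Imp a b => forall v, bigcapN w v -> ~ forces M v a \/ forces M v b
  | SImp a b => forall v, bigcupN w v -> ~ forces M v a \/ forces M v b
  | Delta a => forall v, bigcupN w v -> forces M v a
  end.

Definition image {A B : Type} (f : A -> B) (X : A -> Prop) : B -> Prop :=
  fun y => exists x, X x /\ f x = y.

Definition set_eq {T : Type} (A B : T -> Prop) := forall x, A x <-> B x.

Definition bounded_morphism (M1 M2 : model) (f : W M1 -> W M2) : Prop :=
  forall w : W M1,
    (forall q, V M1 q w <-> V M2 q (f w)) /\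
    set_eq (image f (bigcapN w)) (bigcapN (f w)) /\
    set_eq (image f (bigcupN w)) (bigcupN (f w)).

Definition behaviorally_equivalent (M1 M2 : model) (w1 : W M1) (w2 : W M2) : Prop :=
  exists (B : model) (f : W M1 -> W B) (g : W M2 -> W B),
    is_nIML1 B /\ bounded_morphism M1 B f /\ bounded_morphism M2 B g /\ f w1 = g w2.

From Stdlib Require Import Setoid.

(* Forcing is preserved along any bounded morphism, by induction on the formula;
   behaviourally equivalent worlds then force the same formulas as their common
   image. *)

Lemma forall_image_iff {A B : Type} (f : A -> B) (X : A -> Prop) (Y : B -> Prop)
    (P : A -> Prop) (Q : B -> Prop) :
  set_eq (image f X) Y -> (forall x, P x <-> Q (f x)) ->
  (forall y, Y y -> Q y) <-> (forall x, X x -> P x).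
Proof.
  intros HXY HPQ; split.
  - intros HQ x Hx. apply HPQ, HQ, HXY. exists x; auto.
  - intros HP y Hy. apply HXY in Hy as [x [Hx <-]]. apply HPQ, HP, Hx.
Qed.

Lemma bounded_morphism_forces (M B : model) (f : W M -> W B) :
  bounded_morphism M B f ->
  forall phi w, forces M w phi <-> forces B (f w) phi.
Proof.
  intros Hf phi.
  induction phi as [q| |a IHa b IHb|a IHa b IHb|a IHa b IHb|a IHa b IHb|a IHa];
    intros w; simpl; destruct (Hf w) as [Hvar [Hcap Hcup]].
  - apply Hvar.
  - reflexivity.
  - rewrite IHa, IHb; reflexivity.
  - rewrite IHa, IHb; reflexivity.
  - symmetry; apply (forall_image_iff f _ _ _ _ Hcap).
    intros x; rewrite IHa, IHb; reflexivity.
  - symmetry; apply (forall_image_iff f _ _ _ _ Hcup).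
    intros x; rewrite IHa, IHb; reflexivity.
  - symmetry; apply (forall_image_iff f _ _ _ _ Hcup), IHa.
Qed.

Theorem theorem7p2 (M1 M2 : model) (w1 : W M1) (w2 : W M2) :
  is_nIML1 M1 -> is_nIML1 M2 ->
  behaviorally_equivalent M1 M2 w1 w2 ->
  forall phi : form, forces M1 w1 phi <-> forces M2 w2 phi.
Proof.
  intros _ _ [B [f [g [_ [Hf [Hg Hfg]]]]]] phi.
  rewrite (bounded_morphism_forces _ _ f Hf), (bounded_morphism_forces _ _ g Hg), Hfg.
  reflexivity.
Qed.
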